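(* Let $M$ be a free $\mathbb{T}$-module with a finite $\mathbb{T}$-basis, $V$ its associated complex vector space, and $(\cdot,\cdot)$ a bicomplex scalar product on $M$ which is hyperbolic positive and closed on $V$. Then $V$ equipped with the restriction of $(\cdot,\cdot)$ is a complex (over $\mathbb{C}(\mathbf{i_1})$) pre-Hilbert space (inner product space).
   Context: Bicomplex numbers: $\mathbb{T}=\{z_1+z_2\mathbf{i_2}: z_1,z_2\in\mathbb{C}(\mathbf{i_1})\}$, $\mathbb{C}(\mathbf{i_1})=\{x+y\mathbf{i_1}: x,y\in\mathbb{R}\}$, $\mathbf{i_1}^2=\mathbf{i_2}^2=-1$, $\mathbf{i_1}\mathbf{i_2}=\mathbf{i_2}\mathbf{i_1}=\mathbf{j}$, $\mathbf{j}^2=1$ (commutative). Hyperbolic numbers $\mathbb{D}=\{x+y\mathbf{j}:x,y\in\mathbb{R}\}$. Idempotents $\mathbf{e_1}=(1+\mathbf{j})/2$, $\mathbf{e_2}=(1-\mathbf{j})/2$. Conjugation: $(z_1+z_2\mathbf{i_2})^{\dagger_3}=\overline{z_1}-\overline{z_2}\mathbf{i_2}$. $\mathbb{D}^+=\{a\mathbf{e_1}+b\mathbf{e_2}: a,b\ge 0\}$. $M$ has $\mathbb{T}$-basis $\{\widehat m_1,\dots,\widehat m_n\}$ and $V=\{\sum x_l\widehat m_l: x_l\in\mathbb{C}(\mathbf{i_1})\}$. A bicomplex scalar product is a map $(\cdot,\cdot):M\times M\to\mathbb{T}$ with: $(\widehat X,\widehat Y_1+\widehat Y_2)=(\widehat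 X,\widehat Y_1)+(\widehat X,\widehat Y_2)$; $(\widehat X,\alpha\widehat Y)=\alpha(\widehat X,\widehat Y)$ for $\alpha\in\mathbb{T}$; $(\widehat X,\widehat Y)=(\widehat Y,\widehat X)^{\dagger_3}$; $(\widehat X,\widehat X)=0\iff\widehat X=0$. Hyperbolic positive: $(\widehat X,\widehat X)\in\mathbb{D}^+$ for all $\widehat X\in M$. Closed on $V$: $(\widehat X,\widehat Y)\in\mathbb{C}(\mathbf{i_1})$ for all $\widehat X,\widehat Y\in V$. *)

(* C(i1) is modelled as R[i] = complex R for R : rcfType. *)
From HB Require Import structures.
From mathcomp Require Import all_boot all_order all_algebra.
From mathcomp Require Import complex.
Set Implicit Arguments. Unset Strict Implicit. Unset Printing Implicit Defensive.
Import Order.TTheory GRing.Theory Num.Theory.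
Local Open Scope ring_scope.

(* Bicomplex number z1 + z2 i2, represented by the pair (z1, z2). *)
Definition bicomplex (R : rcfType) := (R[i] * R[i])%type.

Definition bc_add (R : rcfType) (z w : bicomplex R) : bicomplex R :=
  (z.1 + w.1, z.2 + w.2).
(* (z1 + z2 i2)(w1 + w2 i2) = (z1 w1 - z2 w2) + (z1 w2 + z2 w1) i2 *)
Definition bc_mul (R : rcfType) (z w : bicomplex R) : bicomplex R :=
  (z.1 * w.1 - z.2 * w.2, z.1 * w.2 + z.2 * w.1).
Definition bc0 (R : rcfType) : bicomplex R := (0, 0).
Definition bc_of (R : rcfType) (z : R[i]) : bicomplex R := (z, 0).
Definition bc_conj3 (R : rcfType) (z : bicomplex R) : bicomplex R :=
  ((z.1)^*, - (z.2)^*).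

(* j = i1 i2 = (0, 'i); e1 = (1+j)/2, e2 = (1-j)/2 *)
Definition bc_e1 (R : rcfType) : bicomplex R := (2^-1, 2^-1 * 'i%C).
Definition bc_e2 (R : rcfType) : bicomplex R := (2^-1, - (2^-1 * 'i%C)).

Definition hyp_nonneg (R : rcfType) (w : bicomplex R) : Prop :=
  exists a b : R, 0 <= a /\ 0 <= b /\
    w = bc_add (bc_mul (bc_of (a%:C)%C) (bc_e1 R)) (bc_mul (bc_of (b%:C)%C) (bc_e2 R)).

(* The free T-module M with T-basis {m_1,...,m_n}, represented by coordinates:
   X = sum_l X l * m_l. *)
Definition bmod (R : rcfType) (n : nat) := {ffun 'I_n -> bicomplex R}.
Definition bmod_add (R : rcfType) (n : nat) (X Y : bmod R n) : bmod R n :=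
  [ffun l => bc_add (X l) (Y l)].
Definition bmod_scale (R : rcfType) (n : nat) (a : bicomplex R) (X : bmod R n)
  : bmod R n := [ffun l => bc_mul a (X l)].
Definition bmod0 (R : rcfType) (n : nat) : bmod R n := [ffun => bc0 R].

(* V = { sum_l x_l m_l : x_l in C(i1) }, parametrized by the coordinates x *)
Definition embV (R : rcfType) (n : nat) (x : {ffun 'I_n -> R[i]}) : bmod R n :=
  [ffun l => bc_of (x l)].

Definition is_bicomplex_scalar_product (R : rcfType) (n : nat)
  (sp : bmod R n -> bmod R n -> bicomplex R) : Prop :=
  [/\ (forall X Y1 Y2, sp X (bmod_add Y1 Y2) = bc_add (sp X Y1) (sp X Y2)),
      (forall X Y a, sp X (bmod_scale a Y) = bc_mul a (sp X Y)),
      (forall X Y, sp X Y = bc_conj3 (sp Y X)) &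
      (forall X, sp X X = bc0 R <-> X = bmod0 R n)].

Definition hyperbolic_positive (R : rcfType) (n : nat)
  (sp : bmod R n -> bmod R n -> bicomplex R) : Prop :=
  forall X, hyp_nonneg (sp X X).

Definition closed_on_V (R : rcfType) (n : nat)
  (sp : bmod R n -> bmod R n -> bicomplex R) : Prop :=
  forall x y : {ffun 'I_n -> R[i]}, exists z : R[i], sp (embV x) (embV y) = bc_of z.

(* complex inner product on the C(i1)-vector space {ffun 'I_n -> R[i]}
   (linear in the second argument, as for the bicomplex scalar product). *)
Definition is_complex_inner_product (R : rcfType) (n : nat)
  (ip : {ffun 'I_n -> R[i]} -> {ffun 'I_n -> R[i]} -> R[i]) : Prop :=
  [/\ (forall x y1 y2, ip x (y1 + y2) = ip x y1 + ip x y2),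
      (forall x y (a : R[i]), ip x (a *: y) = a * ip x y),
      (forall x y, ip x y = (ip y x)^*),
      (forall x, 0 <= ip x x) &
      (forall x, ip x x = 0 -> x = 0)].

From HB Require Import structures.
From mathcomp Require Import all_boot all_order all_algebra.
From mathcomp Require Import complex.
Import Order.TTheory GRing.Theory Num.Theory.
Local Open Scope ring_scope.

(* The restriction to V is simply the first (C(i1)-)component of the bicomplex
   product on embedded vectors: closedness makes the second component vanish,
   the axioms of the bicomplex product restrict to C(i1)-sesquilinearity along
   the embedding V -> M, and the first component of a e1 + b e2 in D^+ is
   (a + b)/2 >= 0. *)

Section Embedding.

Variables (R : rcfType) (n : nat).
Implicit Types (x y : {ffun 'I_n -> R[i]}) (a : R[i]).

Lemma embVD x y : embV (x + y) = bmod_add (embV x) (embV y).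
Proof. by apply/ffunP => l; rewrite !ffunE /bc_add /bc_of /= addr0. Qed.

Lemma embVZ a x : embV (a *: x) = bmod_scale (bc_of a) (embV x).
Proof.
by apply/ffunP => l; rewrite !ffunE /bc_mul /bc_of /= !mulr0 mul0r subr0 addr0.
Qed.

Lemma embV_eq0 x : embV x = bmod0 R n -> x = 0.
Proof. by move/ffunP => Ex; apply/ffunP => l; move: (Ex l); rewrite !ffunE; case. Qed.

End Embedding.

Lemma hyp_nonneg_fst_ge0 (R : rcfType) (w : bicomplex R) : hyp_nonneg w -> 0 <= w.1.
Proof.
move=> [a [b [a_ge0 [b_ge0 ->]]]].
rewrite /bc_add /bc_mul /bc_of /bc_e1 /bc_e2 /= !mul0r !subr0.
by apply: addr_ge0; apply: mulr_ge0; rewrite ?ler0c // invr_ge0 ler0n.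
Qed.

Definition restrictV {R : rcfType} {n : nat}
    (sp : bmod R n -> bmod R n -> bicomplex R) (x y : {ffun 'I_n -> R[i]}) : R[i] :=
  (sp (embV x) (embV y)).1.

Section Restriction.

Variables (R : rcfType) (n : nat) (sp : bmod R n -> bmod R n -> bicomplex R).
Hypothesis sp_closed : closed_on_V sp.

Lemma restrictV_embV x y : sp (embV x) (embV y) = bc_of (restrictV sp x y).
Proof. by rewrite /restrictV; have [z ->] := sp_closed x y. Qed.

Lemma restrictV_inner_product :
  is_bicomplex_scalar_product sp -> hyperbolic_positive sp ->
  is_complex_inner_product (restrictV sp).
Proof.
move=> [spD spZ sp_conj sp_def] sp_pos; split.
- by move=> x y1 y2; rewrite /restrictV embVD spD.
- by move=> x y a; rewrite /restrictV embVZ spZ /bc_mul /= mul0r subr0.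
- by move=> x y; rewrite /restrictV sp_conj.
- by move=> x; apply: hyp_nonneg_fst_ge0.
- by move=> x ip_xx0; apply: embV_eq0; apply/sp_def; rewrite restrictV_embV ip_xx0.
Qed.

End Restriction.

Theorem mainTheorem7 (R : rcfType) (n : nat)
  (sp : bmod R n -> bmod R n -> bicomplex R) :
  is_bicomplex_scalar_product sp ->
  hyperbolic_positive sp ->
  closed_on_V sp ->
  exists ip : {ffun 'I_n -> R[i]} -> {ffun 'I_n -> R[i]} -> R[i],
    (forall x y, sp (embV x) (embV y) = bc_of (ip x y)) /\
    is_complex_inner_product ip.
Proof.
move=> sp_bsp sp_pos sp_closed; exists (restrictV sp); split.
- exact: restrictV_embV.
- exact: restrictV_inner_product.
Qed.
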